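(* Let $(X,d)$ be a proper metric space and $X+_fW$ a Hausdorff compactification of $X$ that is perspective with respect to the bounded coarse structure $\varepsilon_d$. Then for every $u\in\mathfrak{U}_f$ and every $t>0$ there is a bounded set $S\subseteq X$ such that $(x,y)\in u$ for all $x,y\in X\setminus S$ with $d(x,y)<t$.
   Context: $X+_fW$ is $X\sqcup W$ with closed sets the $D$ with $D\cap X$ closed in $X$, $D\cap W$ closed in $W$, $f(D\cap X)\subseteq D$, for an admissible $f$ (sending $\emptyset$ to $\emptyset$, preserving finite unions); a Hausdorff compactification means it is compact Hausdorff with $X$ dense. $\mathfrak{U}_f$ is its unique compatible uniform structure. $\varepsilon_d=\{e\subseteq X\times X:\sup_{(x,y)\in e}d(x,y)<\infty\}$. Perspective means every $e\in\varepsilon_d$ satisfies $\mathrm{Cl}_{(X+_fW)^2}(e)\cap((X+_fW)^2-X^2)\subseteq\{(p,p):p\in W\}$. *)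

From Stdlib Require Import Reals List.
Open Scope R_scope.

Definition is_topology {T : Type} (opn : (T -> Prop) -> Prop) : Prop :=
  opn (fun _ => True) /\ opn (fun _ => False) /\
  (forall U V, opn U -> opn V -> opn (fun x => U x /\ V x)) /\
  (forall (I : Type) (F : I -> T -> Prop), (forall i, opn (F i)) ->
     opn (fun x => exists i, F i x)).

Definition compact_in {T : Type} (opn : (T -> Prop) -> Prop) (K : T -> Prop) : Prop :=
  forall (I : Type) (U : I -> T -> Prop), (forall i, opn (U i)) ->
    (forall x, K x -> exists i, U i x) ->
    exists l : list I, forall x, K x -> exists i, In i l /\ U i x.

Definition hausdorff {T : Type} (opn : (T -> Prop) -> Prop) : Prop :=
  forall x y : T, x <> y -> exists U V, opn U /\ opn V /\ U x /\ V y /\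
    (forall z, ~ (U z /\ V z)).

Definition closure {T : Type} (opn : (T -> Prop) -> Prop) (A : T -> Prop) (p : T) : Prop :=
  forall U, opn U -> U p -> exists q, A q /\ U q.

Definition prod_open {T1 T2 : Type} (opn1 : (T1 -> Prop) -> Prop)
  (opn2 : (T2 -> Prop) -> Prop) (O : T1 * T2 -> Prop) : Prop :=
  forall p, O p -> exists U V, opn1 U /\ opn2 V /\ U (fst p) /\ V (snd p) /\
    (forall a b, U a -> V b -> O (a, b)).

Definition is_uniformity {T : Type} (Uc : (T * T -> Prop) -> Prop) : Prop :=
  Uc (fun _ => True) /\
  (forall u v, Uc u -> (forall p, u p -> v p) -> Uc v) /\
  (forall u v, Uc u -> Uc v -> Uc (fun p => u p /\ v p)) /\
  (forall u, Uc u -> forall x, u (x, x)) /\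
  (forall u, Uc u -> Uc (fun p => u (snd p, fst p))) /\
  (forall u, Uc u -> exists v, Uc v /\
     forall x y z, v (x, y) -> v (y, z) -> u (x, z)).

Definition uniformity_compatible {T : Type} (Uc : (T * T -> Prop) -> Prop)
  (opn : (T -> Prop) -> Prop) : Prop :=
  forall O, opn O <-> (forall p, O p -> exists u, Uc u /\ forall q, u (p, q) -> O q).

Definition is_metric {X : Type} (d : X -> X -> R) : Prop :=
  (forall x y, d x y = 0 <-> x = y) /\
  (forall x y, d x y = d y x) /\
  (forall x y z, d x z <= d x y + d y z).

Definition metric_open {X : Type} (d : X -> X -> R) (U : X -> Prop) : Prop :=
  forall x, U x -> exists eps, 0 < eps /\ forall y, d x y < eps -> U y.

Definition metric_closed {X : Type} (d : X -> X -> R) (A : X -> Prop) : Prop :=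
  metric_open d (fun x => ~ A x).

Definition metric_bounded {X : Type} (d : X -> X -> R) (A : X -> Prop) : Prop :=
  exists r, forall x y, A x -> A y -> d x y <= r.

Definition proper_metric {X : Type} (d : X -> X -> R) : Prop :=
  forall K, metric_closed d K -> metric_bounded d K -> compact_in (metric_open d) K.

Definition admissible {X W : Type} (f : (X -> Prop) -> (W -> Prop)) : Prop :=
  (forall w, ~ f (fun _ => False) w) /\
  (forall A B w, f (fun x => A x \/ B x) w <-> (f A w \/ f B w)).

Definition closed_sumf {X W : Type} (d : X -> X -> R) (openW : (W -> Prop) -> Prop)
  (f : (X -> Prop) -> (W -> Prop)) (D : X + W -> Prop) : Prop :=
  metric_closed d (fun x => D (inl x)) /\
  openW (fun w => ~ D (inr w)) /\
  (forall w, f (fun x => D (inl x)) w -> D (inr w)).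

Definition open_sumf {X W : Type} (d : X -> X -> R) (openW : (W -> Prop) -> Prop)
  (f : (X -> Prop) -> (W -> Prop)) (O : X + W -> Prop) : Prop :=
  closed_sumf d openW f (fun p => ~ O p).

Definition hausdorff_compactification {X W : Type} (d : X -> X -> R)
  (openW : (W -> Prop) -> Prop) (f : (X -> Prop) -> (W -> Prop)) : Prop :=
  compact_in (open_sumf d openW f) (fun _ => True) /\
  hausdorff (open_sumf d openW f) /\
  (forall O, open_sumf d openW f O -> (exists p, O p) -> exists x, O (inl x)).

Definition in_eps_d {X : Type} (d : X -> X -> R) (e : X * X -> Prop) : Prop :=
  exists r, forall x y, e (x, y) -> d x y <= r.

Definition is_inl {X W : Type} (p : X + W) : Prop :=
  match p with inl _ => True | inr _ => False end.

Definition perspective {X W : Type} (d : X -> X -> R) (openW : (W -> Prop) -> Prop)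
  (f : (X -> Prop) -> (W -> Prop)) : Prop :=
  forall e : X * X -> Prop, in_eps_d d e ->
    forall p q : X + W,
      closure (prod_open (open_sumf d openW f) (open_sumf d openW f))
        (fun r : (X + W) * (X + W) =>
           exists x y, e (x, y) /\ r = (inl x, inl y)) (p, q) ->
      ~ (is_inl p /\ is_inl q) ->
      exists w, p = inr w /\ q = inr w.

From Stdlib Require Import Reals.
From Stdlib Require Import Classical FunctionalExtensionality PropExtensionality List Lra.
Open Scope R_scope.

(* Let S be the set of points x having a partner y with d(x,y) < t and
   (x,y) not in u.  If S accumulated at a point w of W, compactness of the
   second factor would give a cluster point (w,q) of the bad pairs, and
   perspectivity forces q = w.  But a symmetric v with v o v in u makes
   v[w] x v[w] a neighbourhood of (w,w) consisting of pairs in u, which is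
   absurd.  So the closure of S misses W, hence S is covered by finitely many
   unit balls of X, by compactness of X +_f W. *)

Lemma pred_ext {T : Type} (P Q : T -> Prop) : (forall x, P x <-> Q x) -> P = Q.
Proof.
  intro H; apply functional_extensionality; intro x; apply propositional_extensionality; auto.
Qed.

Lemma pred_ext_transport {T : Type} (Pr : (T -> Prop) -> Prop) (P Q : T -> Prop) :
  (forall x, P x <-> Q x) -> Pr P -> Pr Q.
Proof. intro H; rewrite (pred_ext P Q H); auto. Qed.

Lemma closure_mono {T : Type} (opn : (T -> Prop) -> Prop) (A B : T -> Prop) p :
  (forall q, A q -> B q) -> closure opn A p -> closure opn B p.
Proof.
  intros HAB Hp U HU Up. destruct (Hp U HU Up) as [q [Aq Uq]]. eauto.
Qed.

Lemma not_closure {T : Type} (opn : (T -> Prop) -> Prop) (A : T -> Prop) p :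
  ~ closure opn A p -> exists U, opn U /\ U p /\ forall q, U q -> ~ A q.
Proof.
  intro Hp. apply NNPP; intro Hno. apply Hp. intros U HU Up.
  apply NNPP; intro Hmiss. apply Hno. exists U. split; [exact HU|]. split; [exact Up|].
  intros q Uq Aq. apply Hmiss. eauto.
Qed.

Lemma open_finite_inter {T I : Type} (opn : (T -> Prop) -> Prop) (l : list I)
  (U : I -> T -> Prop) :
  opn (fun _ => True) ->
  (forall U V, opn U -> opn V -> opn (fun x => U x /\ V x)) ->
  (forall i, opn (U i)) -> opn (fun x => forall i, In i l -> U i x).
Proof.
  intros HT Hinter HU. induction l as [|i l IH].
  - eapply pred_ext_transport; [|exact HT].
    intro x; simpl; split; [intros _ j [] | auto].
  - eapply pred_ext_transport; [|exact (Hinter _ _ (HU i) IH)].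
    intro x; simpl; split.
    + intros [Hi Hl] j [<-|Hj]; auto.
    + intro H; split; auto.
Qed.

Lemma closure_proj_compact {T1 T2 : Type} (opn1 : (T1 -> Prop) -> Prop)
  (opn2 : (T2 -> Prop) -> Prop) (E : T1 * T2 -> Prop) p :
  opn1 (fun _ => True) ->
  (forall U V, opn1 U -> opn1 V -> opn1 (fun x => U x /\ V x)) ->
  compact_in opn2 (fun _ => True) ->
  closure opn1 (fun a => exists b, E (a, b)) p ->
  exists q, closure (prod_open opn1 opn2) E (p, q).
Proof.
  intros HT Hinter Hcomp Hp. apply NNPP; intro Hno.
  set (Box := {UV : (T1 -> Prop) * (T2 -> Prop) |
                 opn1 (fst UV) /\ opn2 (snd UV) /\ fst UV p /\
                 forall a b, fst UV a -> snd UV b -> ~ E (a, b)}).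
  destruct (Hcomp Box (fun B => snd (proj1_sig B))) as [l Hl].
  - intro B. exact (proj1 (proj2 (proj2_sig B))).
  - intros q _.
    assert (Hq : ~ closure (prod_open opn1 opn2) E (p, q)) by eauto.
    destruct (not_closure _ _ _ Hq) as [O [HO [Opq HOE]]].
    destruct (HO _ Opq) as [U [V [HU [HV [Up [Vq HUV]]]]]].
    assert (HUVE : forall a b, U a -> V b -> ~ E (a, b)).
    { intros a b Ua Vb Eab. exact (HOE _ (HUV a b Ua Vb) Eab). }
    exists (exist _ (U, V) (conj HU (conj HV (conj Up HUVE)))). exact Vq.
  - set (U0 := fun a => forall B, In B l -> fst (proj1_sig B) a).
    assert (HU0 : opn1 U0).
    { apply open_finite_inter; auto. intro B. exact (proj1 (proj2_sig B)). }
    destruct (Hp U0 HU0) as [a [[b Eab] U0a]].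
    { intros B _. exact (proj1 (proj2 (proj2 (proj2_sig B)))). }
    destruct (Hl b I) as [B [HB Vb]].
    exact (proj2 (proj2 (proj2 (proj2_sig B))) a b (U0a B HB) Vb Eab).
Qed.

Section Uniformity.
Variables (T : Type) (Uc : (T * T -> Prop) -> Prop) (opn : (T -> Prop) -> Prop).
Hypothesis HUc : is_uniformity Uc.
Hypothesis HUc_opn : uniformity_compatible Uc opn.

Lemma uniformity_half u :
  Uc u -> exists v, Uc v /\ forall p a b, v (p, a) -> v (p, b) -> u (a, b).
Proof.
  destruct HUc as [_ [_ [Uinter [_ [Usym Ucomp]]]]].
  intro Hu. destruct (Ucomp u Hu) as [v [Hv Hvv]].
  exists (fun r => v r /\ v (snd r, fst r)). split; [apply Uinter; auto|].
  intros p a b [_ Hap] [Hpb _]. exact (Hvv a p b Hap Hpb).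
Qed.

Lemma uniform_nbhd_interior v p :
  Uc v -> exists O, opn O /\ O p /\ forall q, O q -> v (p, q).
Proof.
  destruct HUc as [_ [_ [_ [Urefl [_ Ucomp]]]]].
  intro Hv.
  exists (fun q => exists v', Uc v' /\ forall r, v' (q, r) -> v (p, r)).
  split; [|split].
  - apply HUc_opn. intros q [v' [Hv' Hq]]. destruct (Ucomp v' Hv') as [w [Hw Hww]].
    exists w. split; [exact Hw|]. intros q' Hqq'. exists w. split; [exact Hw|].
    intros r Hr. apply Hq. exact (Hww q q' r Hqq' Hr).
  - exists v. auto.
  - intros q [v' [Hv' Hq]]. apply Hq. exact (Urefl v' Hv' q).
Qed.

Lemma closure_diag_uniform (E : T * T -> Prop) p :
  closure (prod_open opn opn) E (p, p) ->
  forall u, Uc u -> exists a b, E (a, b) /\ u (a, b).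
Proof.
  intros Hp u Hu.
  destruct (uniformity_half u Hu) as [v [Hv Hvu]].
  destruct (uniform_nbhd_interior v p Hv) as [O [HO [Op HOv]]].
  destruct (Hp (fun r => O (fst r) /\ O (snd r))) as [[a b] [Eab [Oa Ob]]].
  - intros r [O1 O2]. exists O, O. repeat split; auto.
  - simpl; auto.
  - exists a, b. split; [exact Eab|]. exact (Hvu p a b (HOv a Oa) (HOv b Ob)).
Qed.

End Uniformity.

Lemma metric_bounded_of_radius {X : Type} (d : X -> X -> R) (A : X -> Prop) x0 M :
  is_metric d -> (forall x, A x -> d x0 x <= M) -> metric_bounded d A.
Proof.
  intros [_ [Hsym Htri]] HM. exists (2 * M). intros x y Ax Ay.
  pose proof (HM x Ax). pose proof (HM y Ay). pose proof (Htri x x0 y).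
  rewrite (Hsym x x0) in *. lra.
Qed.

Lemma metric_bounded_finite_balls {X : Type} (d : X -> X -> R) (cs : list X) r :
  is_metric d -> metric_bounded d (fun x => exists c, In c cs /\ d c x < r).
Proof.
  intro Hd. destruct cs as [|c0 cs].
  - exists 0. intros x y [c [[] _]].
  - assert (Hrad : forall ds, exists M, forall x c, In c ds -> d c x < r -> d c0 x <= M).
    { destruct Hd as [_ [_ Htri]].
      induction ds as [|c ds [M HM]].
      - exists 0. intros x c [].
      - exists (Rmax M (d c0 c + r)). intros x c' [<-|Hc'] Hx.
        + pose proof (Htri c0 c x). pose proof (Rmax_r M (d c0 c + r)). lra.
        + pose proof (HM x c' Hc' Hx). pose proof (Rmax_l M (d c0 c + r)). lra. }
    destruct (Hrad (c0 :: cs)) as [M HM].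
    apply (metric_bounded_of_radius d _ c0 M Hd). intros x [c [Hc Hx]]. eauto.
Qed.

Section SumSpace.
Variables (X W : Type) (d : X -> X -> R) (openW : (W -> Prop) -> Prop)
  (f : (X -> Prop) -> (W -> Prop)).
Hypothesis HW : is_topology openW.
Hypothesis Hf : admissible f.
Hypothesis Hd : is_metric d.

Let opn := open_sumf d openW f.

Definition sum_ball (c : X) (r : R) (p : X + W) : Prop :=
  match p with inl x => d c x < r | inr _ => False end.

Definition embed (A : X -> Prop) (p : X + W) : Prop := exists x, A x /\ p = inl x.

Lemma admissible_mono (A B : X -> Prop) w : (forall x, A x -> B x) -> f A w -> f B w.
Proof.
  intros HAB HA.
  rewrite (pred_ext B (fun x => A x \/ B x)) by (intro x; split; auto; intros [h|h]; auto).
  apply (proj2 Hf). left; exact HA.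
Qed.

Lemma open_sumf_True : opn (fun _ => True).
Proof.
  destruct HW as [HT _].
  split; [|split].
  - intros x _. exists 1. split; [lra|]. intros y _ N. apply N. exact I.
  - eapply pred_ext_transport; [|exact HT]. intro; simpl; tauto.
  - intros w Hw. exfalso.
    rewrite (pred_ext (fun _ : X => ~ True) (fun _ => False)) in Hw by (intro; tauto).
    exact (proj1 Hf w Hw).
Qed.

Lemma open_sumf_and O1 O2 : opn O1 -> opn O2 -> opn (fun p => O1 p /\ O2 p).
Proof.
  destruct HW as [_ [_ [Hinter _]]].
  intros [h1 [h2 h3]] [g1 [g2 g3]]. split; [|split].
  - intros x Hx. apply NNPP in Hx. destruct Hx as [a b].
    destruct (h1 x (fun H => H a)) as [e1 [He1 H1]].
    destruct (g1 x (fun H => H b)) as [e2 [He2 H2]].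
    exists (Rmin e1 e2). split; [apply Rmin_pos; auto|].
    intros y Hy N.
    pose proof (Rmin_l e1 e2). pose proof (Rmin_r e1 e2).
    apply (H1 y ltac:(lra)); intro; apply (H2 y ltac:(lra)); intro; apply N; split; auto.
  - eapply pred_ext_transport; [|exact (Hinter _ _ h2 g2)]. intro; simpl; tauto.
  - intros w Hw.
    assert (Hw' : f (fun x => ~ O1 (inl x) \/ ~ O2 (inl x)) w).
    { eapply admissible_mono; [|exact Hw]. intros x Hx. simpl in Hx. tauto. }
    apply (proj2 Hf) in Hw'.
    destruct Hw' as [a|a]; [apply h3 in a|apply g3 in a]; simpl in *; tauto.
Qed.

Lemma open_sumf_ball c r : opn (sum_ball c r).
Proof.
  destruct Hd as [_ [_ Htri]]. destruct HW as [_ [HF _]].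
  split; [|split].
  - intros x Hx. apply NNPP in Hx.
    exists (r - d c x). split; [simpl in Hx; lra|]. intros y Hy N. apply N.
    pose proof (Htri c x y). simpl. lra.
  - eapply pred_ext_transport; [|exact HF]. intro; simpl; tauto.
  - intros w _ H. exact H.
Qed.

Hypothesis Hcompact : compact_in opn (fun _ => True).

Lemma metric_bounded_of_closure_disjoint_remainder (A : X -> Prop) :
  (forall w, ~ closure opn (embed A) (inr w)) -> metric_bounded d A.
Proof.
  intro Hfar.
  set (Index := (X + {O : X + W -> Prop | opn O /\ forall q, O q -> ~ embed A q})%type).
  set (cover := fun i : Index => match i with
                                 | inl c => sum_ball c 1
                                 | inr V => proj1_sig V end).
  destruct (Hcompact Index cover) as [l Hl].
  - intros [c|V]; [apply open_sumf_ball | exact (proj1 (proj2_sig V))].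
  - intros [c|w] _.
    + exists (inl c). simpl. rewrite (proj2 (proj1 Hd c c) eq_refl). lra.
    + destruct (not_closure _ _ _ (Hfar w)) as [O [HO [Ow HOA]]].
      exists (inr (exist _ O (conj HO HOA))). exact Ow.
  - set (centers := flat_map (fun i : Index => match i with
                                               | inl c => c :: nil
                                               | inr _ => nil end) l).
    destruct (metric_bounded_finite_balls d centers 1 Hd) as [M HM].
    exists M. intros x y Ax Ay.
    assert (Hcov : forall z, A z -> exists c, In c centers /\ d c z < 1).
    { intros z Az. destruct (Hl (inl z) I) as [[c|V] [Hi Hz]].
      - exists c. split; [apply in_flat_map; exists (inl c); simpl; auto | exact Hz].
      - exfalso. exact (proj2 (proj2_sig V) _ Hz (ex_intro _ z (conj Az eq_refl))). }
    exact (HM x y (Hcov x Ax) (Hcov y Ay)).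
Qed.

Variable Uf : ((X + W) * (X + W) -> Prop) -> Prop.
Hypothesis HUf : is_uniformity Uf.
Hypothesis HUf_opn : uniformity_compatible Uf opn.
Hypothesis Hpersp : perspective d openW f.

Lemma closure_disjoint_remainder (e : X * X -> Prop) u :
  in_eps_d d e -> Uf u -> (forall x y, e (x, y) -> ~ u (inl x, inl y)) ->
  forall w, ~ closure opn (embed (fun x => exists y, e (x, y))) (inr w).
Proof.
  intros He Hu Hdisj w Hw.
  set (E := fun r : (X + W) * (X + W) => exists x y, e (x, y) /\ r = (inl x, inl y)).
  assert (HwE : closure opn (fun a => exists b, E (a, b)) (inr w)).
  { eapply closure_mono; [|exact Hw].
    intros q [x [[y exy] ->]]. exists (inl y), x, y. auto. }
  destruct (closure_proj_compact opn opn E (inr w) open_sumf_True open_sumf_and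
              Hcompact HwE) as [q Hq].
  destruct (Hpersp e He (inr w) q Hq) as [w' [Hw' ->]]; [simpl; tauto|].
  injection Hw' as <-.
  destruct (closure_diag_uniform _ Uf opn HUf HUf_opn E _ Hq u Hu)
    as [a [b [[x [y [exy Hab]]] uab]]].
  injection Hab as -> ->. exact (Hdisj x y exy uab).
Qed.

End SumSpace.

Theorem mainTheorem18 (X W : Type) (d : X -> X -> R) (openW : (W -> Prop) -> Prop)
  (f : (X -> Prop) -> (W -> Prop))
  (Hd : is_metric d) (Hproper : proper_metric d)
  (HW : is_topology openW) (Hf : admissible f)
  (Hcomp : hausdorff_compactification d openW f)
  (Hpersp : perspective d openW f)
  (Uf : ((X + W) * (X + W) -> Prop) -> Prop)
  (HUf : is_uniformity Uf)
  (HUfc : uniformity_compatible Uf (open_sumf d openW f)) :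
  forall u, Uf u -> forall t, 0 < t ->
    exists S : X -> Prop, metric_bounded d S /\
      forall x y, ~ S x -> ~ S y -> d x y < t -> u (inl x, inl y).
Proof.
  intros u Hu t Ht.
  set (bad := fun p : X * X => d (fst p) (snd p) < t /\ ~ u (inl (fst p), inl (snd p))).
  exists (fun x => exists y, bad (x, y)). split.
  - apply (metric_bounded_of_closure_disjoint_remainder X W d openW f HW Hd
             (proj1 Hcomp)).
    apply (closure_disjoint_remainder X W d openW f HW Hf (proj1 Hcomp) Uf HUf HUfc
             Hpersp bad u); auto.
    + exists t. intros x y [Hxy _]. simpl in Hxy. lra.
    + intros x y [_ Hxy]. exact Hxy.
  - intros x y Hx _ Hxy. apply NNPP. intro Hn. apply Hx. exists y. split; auto.
Qed.
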